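(* For real $m,n\ge 2$, let $p_c(m,n)$ denote the unique fixed point in $(0,1)$ of $f_{m,n}(p)=1-(1-p^n)^m$. Then for $m,n\ge 2$, $\frac{\partial p_c}{\partial m}<0$ and $\frac{\partial p_c}{\partial n}>0$.
   Context: The paper asserts that for $m,n\ge 2$ the function $f_{m,n}(p)=1-(1-p^n)^m$ has exactly one fixed point in $(0,1)$. This fixed point is repelling, while $0$ and $1$ are attracting fixed points. For integers $m,n$, this fixed point is the critical bond-percolation probability of the diamond fractal $D(m,n)$. $D(m,n)$ is obtained by starting from a single edge and repeatedly replacing every edge by $m$ parallel disjoint paths of $n$ edges each. *)

From Stdlib Require Import Reals ClassicalEpsilon.
From Coquelicot Require Import Coquelicot.
Open Scope R_scope.

Definition f_mn (m n p : R) : R := 1 - Rpower (1 - Rpower p n) m.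

Definition pc (m n : R) : R :=
  epsilon (inhabits 0) (fun p => 0 < p < 1 /\ f_mn m n p = p).

(* The fixed-point equation 1 - p = (1 - p^n)^m reads m = ln(1 - p) / ln(1 - p^n).
   The right-hand side is a strictly decreasing function of p on (0,1), because
   Bernoulli's inequality 1 - p^n < n (1 - p) and the chord inequality
   p^n ln(1 - p) < p ln(1 - p^n) (both from the concavity of ln) fix the sign of
   its derivative. Hence p_c(., n) is its inverse, and the inverse function rule
   gives dp_c/dm < 0. The substitution p = 1 - r^m sends fixed points of f_{n,m}
   to fixed points of f_{m,n}, so p_c(m, y) = 1 - p_c(y, m)^m near y = n, and the
   chain rule turns dp_c/dm < 0 at (n, m) into dp_c/dn > 0 at (m, n). *)

From Stdlib Require Import Reals Lra Psatz Ranalysis5 ClassicalEpsilon.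
From Coquelicot Require Import Coquelicot.
Open Scope R_scope.

Lemma ln_lt_0 x : 0 < x < 1 -> ln x < 0.
Proof. intros Hx. rewrite <- ln_1. apply ln_increasing; lra. Qed.

Lemma ln_lt_sub_1 x : 0 < x -> x <> 1 -> ln x < x - 1.
Proof.
intros Hx Hx1.
assert (Hl : ln x <> 0).
{ intros E. apply Hx1. rewrite <- (exp_ln x Hx), E. apply exp_0. }
pose proof (exp_ineq1 _ Hl) as H. rewrite exp_ln in H; lra.
Qed.

Lemma ln_le_sub_1 x : 0 < x -> ln x <= x - 1.
Proof.
intros Hx. destruct (Req_dec x 1) as [->|Hx1].
- rewrite ln_1; lra.
- left; apply ln_lt_sub_1; auto.
Qed.

Lemma ln_strict_concave a b l : 0 < a -> 0 < b -> a <> b -> 0 < l < 1 ->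
  l * ln a + (1 - l) * ln b < ln (l * a + (1 - l) * b).
Proof.
intros Ha Hb Hab Hl.
set (c := l * a + (1 - l) * b).
assert (Hc : 0 < c) by (unfold c; nra).
assert (Hac : a / c <> 1).
{ assert (Hd : a - c = (1 - l) * (a - b)) by (unfold c; ring).
  intros E.
  assert (Hca : a = c).
  { apply (Rmult_eq_reg_r (/ c)); [|apply Rinv_neq_0_compat; lra].
    unfold Rdiv in E. rewrite E. field. lra. }
  assert (Hz : (1 - l) * (a - b) = 0) by lra.
  apply Rmult_integral in Hz. lra. }
(* tangent line of ln at c, applied at a (strictly) and at b *)
pose proof (ln_lt_sub_1 (a / c) (Rdiv_lt_0_compat _ _ Ha Hc) Hac) as Ta.
pose proof (ln_le_sub_1 (b / c) (Rdiv_lt_0_compat _ _ Hb Hc)) as Tb.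
rewrite ln_div in Ta, Tb by lra.
assert (Hs : l * (a / c - 1) + (1 - l) * (b / c - 1) = 0)
  by (unfold c; field; unfold c in Hc; lra).
nra.
Qed.

Lemma Rpower_lt_weighted_mean u l : 0 < u -> u <> 1 -> 0 < l < 1 ->
  Rpower u l < l * u + 1 - l.
Proof.
intros Hu Hu1 Hl.
pose proof (ln_strict_concave u 1 l Hu Rlt_0_1 Hu1 Hl) as H.
rewrite ln_1, Rmult_0_r, Rplus_0_r, Rmult_1_r in H.
assert (Hpos : 0 < l * u + (1 - l)) by nra.
replace (l * u + 1 - l) with (l * u + (1 - l)) by ring.
rewrite <- (exp_ln _ Hpos). apply exp_increasing. exact H.
Qed.

Lemma ln_one_minus_chord s t : 0 < s -> s < t -> t < 1 ->
  s * ln (1 - t) < t * ln (1 - s).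
Proof.
intros Hs Hst Ht.
assert (Hl : 0 < s / t < 1).
{ split; [apply Rdiv_lt_0_compat; lra|].
  apply (Rmult_lt_reg_r t); [lra|]. field_simplify; lra. }
pose proof (ln_strict_concave (1 - t) 1 (s / t) ltac:(lra) Rlt_0_1 ltac:(lra) Hl) as H.
rewrite ln_1, Rmult_0_r, Rplus_0_r, Rmult_1_r in H.
replace (s / t * (1 - t) + (1 - s / t)) with (1 - s) in H by (field; lra).
apply (Rmult_lt_compat_l t) in H; [|lra].
replace (t * (s / t * ln (1 - t))) with (s * ln (1 - t)) in H by (field; lra).
exact H.
Qed.

Lemma Rpower_lt_exponent_decr p x y : 0 < p < 1 -> x < y -> Rpower p y < Rpower p x.
Proof.
intros Hp Hxy. unfold Rpower. apply exp_increasing.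
pose proof (ln_lt_0 p Hp). nra.
Qed.

Lemma Rpower_in_unit_interval p N : 0 < p < 1 -> 0 < N -> 0 < Rpower p N < 1.
Proof.
intros Hp HN. split; [apply exp_pos|].
rewrite <- (Rpower_O p) by lra. apply Rpower_lt_exponent_decr; lra.
Qed.

Lemma Rpower_lt_base p N : 0 < p < 1 -> 1 < N -> Rpower p N < p.
Proof.
intros Hp HN. rewrite <- (Rpower_1 p) at 2 by lra.
apply Rpower_lt_exponent_decr; lra.
Qed.

Lemma Rpower_bernoulli p N : 0 < p < 1 -> 1 < N -> 1 - Rpower p N < N * (1 - p).
Proof.
intros Hp HN.
set (E := Rpower p N).
assert (HE : 0 < E < 1) by (apply Rpower_in_unit_interval; lra).
assert (HiN : 0 < / N < 1).
{ split; [apply Rinv_0_lt_compat; lra|]. rewrite <- Rinv_1. apply Rinv_lt_contravar; lra. }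
pose proof (Rpower_lt_weighted_mean E (/ N) ltac:(lra) ltac:(lra) HiN) as H.
unfold E in H. rewrite Rpower_mult, Rinv_r, Rpower_1 in H by lra. fold E in H.
apply (Rmult_lt_compat_l N) in H; [|lra].
replace (N * (/ N * E + 1 - / N)) with (E + N - 1) in H by (field; lra).
lra.
Qed.

Lemma is_derive_inverse_incr (f g f' : R -> R) (a b y : R) :
  a < b -> f a < y < f b ->
  (forall x z, a <= x -> x < z -> z <= b -> f x < f z) ->
  (forall x, a <= x <= b -> is_derive f x (f' x)) ->
  (forall z, f a <= z <= f b -> a <= g z <= b /\ f (g z) = z) ->
  f' (g y) <> 0 ->
  is_derive g y (/ f' (g y)).
Proof.
intros Hab Hy Hinc Hder Hinv Hd.
assert (Hfg : forall z, f a <= z -> z <= f b -> comp f g z = id z)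
  by (intros z H1 H2; apply (Hinv z); lra).
assert (Hgwf : forall z, f a <= z -> z <= f b -> a <= g z <= b)
  by (intros z H1 H2; apply (Hinv z); lra).
assert (Hgf : forall x, a <= x <= b -> g (f x) = x)
  by exact (leftinv_is_rightinv_interv f g a b Hinc Hfg Hgwf).
assert (Hfd : forall x, g (f a) <= x <= g (f b) -> derivable_pt f x).
{ intros x Hx. rewrite !Hgf in Hx by lra.
  exists (f' x). apply is_derive_Reals, Hder, Hx. }
assert (Hgy : g (f a) <= g y <= g (f b)).
{ rewrite !Hgf by lra. apply Hgwf; lra. }
assert (Hgc : continuity_pt g y)
  by (apply (continuity_pt_recip_interv f g a b); auto;
      intros x Hx; apply derivable_continuous_pt, Hfd; rewrite !Hgf; lra).
assert (Hval : derive_pt f (g y) (Hfd (g y) Hgy) = f' (g y)).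
{ apply derive_pt_eq_0, is_derive_Reals, Hder. rewrite !Hgf in Hgy by lra. exact Hgy. }
apply is_derive_Reals.
replace (/ f' (g y)) with (1 / derive_pt f (g y) (Hfd (g y) Hgy)) by (rewrite Hval; field; exact Hd).
apply (derivable_pt_lim_recip_interv f g (f a) (f b) y Hfd Hgc).
- lra.
- exact Hy.
- intros z Hz. apply Hfg; lra.
- rewrite Hval; exact Hd.
Qed.

Lemma is_derive_inverse_decr (f g f' : R -> R) (a b y : R) :
  a < b -> f b < y < f a ->
  (forall x z, a <= x -> x < z -> z <= b -> f z < f x) ->
  (forall x, a <= x <= b -> is_derive f x (f' x)) ->
  (forall z, f b <= z <= f a -> a <= g z <= b /\ f (g z) = z) ->
  f' (g y) <> 0 ->
  is_derive g y (/ f' (g y)).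
Proof.
intros Hab Hy Hdec Hder Hinv Hd.
assert (Hopp : is_derive (fun z => g (- z)) (- y) (/ - f' (g (- - y)))).
{ apply (is_derive_inverse_incr (fun x => - f x) (fun z => g (- z)) (fun x => - f' x) a b).
  - exact Hab.
  - lra.
  - intros x z Hx Hxz Hz. pose proof (Hdec x z Hx Hxz Hz). lra.
  - intros x Hx. exact (is_derive_opp f x _ (Hder x Hx)).
  - intros z Hz. destruct (Hinv (- z)) as [Hg Hfg]; [lra|]. split; [exact Hg | lra].
  - rewrite Ropp_involutive. lra. }
rewrite Ropp_involutive in Hopp.
pose proof (is_derive_comp _ _ y _ _ Hopp (is_derive_opp _ _ _ (is_derive_id y))) as Hc.
replace (/ f' (g y)) with (scal (opp 1) (/ - f' (g y)))
  by (change (- 1 * / - f' (g y) = / f' (g y)); field; exact Hd).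
apply (is_derive_ext _ _ _ _ (fun z => f_equal g (Ropp_involutive z))). exact Hc.
Qed.

(* The value of m for which p is a fixed point of f_{m,N}; p_c(., N) is its inverse. *)
Definition mfix (N p : R) : R := ln (1 - p) / ln (1 - Rpower p N).

Definition mfix_deriv (N p : R) : R :=
  (N * Rpower p N * ln (1 - p) / (p * (1 - Rpower p N)) - ln (1 - Rpower p N) / (1 - p))
  / ln (1 - Rpower p N) ^ 2.

Lemma is_derive_mfix N p : 0 < N -> 0 < p < 1 -> is_derive (mfix N) p (mfix_deriv N p).
Proof.
intros HN Hp.
pose proof (Rpower_in_unit_interval p N Hp HN) as HE.
assert (HB : ln (1 - Rpower p N) < 0) by (apply ln_lt_0; lra).
unfold mfix, mfix_deriv, Rpower in *. auto_derive.
- unfold Rminus in *. repeat split; lra.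
- unfold Rminus in *. field. repeat split; lra.
Qed.

Lemma mfix_deriv_lt_0 N p : 1 < N -> 0 < p < 1 -> mfix_deriv N p < 0.
Proof.
intros HN Hp. unfold mfix_deriv.
set (E := Rpower p N).
assert (HE : 0 < E < 1) by (apply Rpower_in_unit_interval; lra).
assert (HEp : E < p) by (apply Rpower_lt_base; lra).
pose proof (Rpower_bernoulli p N Hp HN) as Hbern. fold E in Hbern.
pose proof (ln_one_minus_chord E p ltac:(lra) HEp ltac:(lra)) as Hchord.
set (A := ln (1 - p)) in *. set (B := ln (1 - E)) in *.
assert (HA : A < 0) by (apply ln_lt_0; lra).
assert (HB : B < 0) by (apply ln_lt_0; lra).
set (num := N * E * A / (p * (1 - E)) - B / (1 - p)).
assert (Hw : 0 < p * (1 - p) * (1 - E)) by (apply Rmult_lt_0_compat; [apply Rmult_lt_0_compat|]; lra).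
assert (Hnum : num * (p * (1 - p) * (1 - E)) = N * (1 - p) * (E * A) - p * (1 - E) * B)
  by (unfold num; field; lra).
(* Bernoulli and the chord inequality, multiplied together *)
assert (Hneg : N * (1 - p) * (E * A) < p * (1 - E) * B).
{ assert (HEA : E * A < 0) by nra.
  assert (H1 : N * (1 - p) * (E * A) < (1 - E) * (E * A)) by nra.
  assert (H2 : (1 - E) * (E * A) < (1 - E) * (p * B)) by nra.
  nra. }
assert (Hnum_neg : num < 0) by nra.
unfold Rdiv. apply Rmult_neg_pos; [exact Hnum_neg|].
apply Rinv_0_lt_compat. nra.
Qed.

Lemma mfix_decr N x y : 1 < N -> 0 < x -> x < y -> y < 1 -> mfix N y < mfix N x.
Proof.
intros HN Hx Hxy Hy.
cut (- mfix N x < - mfix N y); [lra|].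
apply (incr_function (fun p => - mfix N p) (Finite 0) (Finite 1) (fun p => - mfix_deriv N p));
  simpl; try lra.
- intros t H0 H1. exact (is_derive_opp (mfix N) t _ (is_derive_mfix N t ltac:(lra) (conj H0 H1))).
- intros t H0 H1. pose proof (mfix_deriv_lt_0 N t HN (conj H0 H1)). lra.
Qed.

Lemma mfix_gt_1 N p : 1 < N -> 0 < p < 1 -> 1 < mfix N p.
Proof.
intros HN Hp. unfold mfix.
pose proof (Rpower_in_unit_interval p N Hp ltac:(lra)) as HE.
pose proof (Rpower_lt_base p N Hp HN) as HEp.
assert (HB : ln (1 - Rpower p N) < 0) by (apply ln_lt_0; lra).
assert (HAB : ln (1 - p) < ln (1 - Rpower p N)) by (apply ln_increasing; lra).
apply (Rmult_lt_reg_r (- ln (1 - Rpower p N))); [lra|].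
replace (ln (1 - p) / ln (1 - Rpower p N) * - ln (1 - Rpower p N)) with (- ln (1 - p))
  by (field; lra).
lra.
Qed.

Lemma fixed_point_iff_mfix M N p : 0 < N -> 0 < p < 1 -> f_mn M N p = p <-> mfix N p = M.
Proof.
intros HN Hp. unfold f_mn, mfix.
pose proof (Rpower_in_unit_interval p N Hp HN) as HE.
assert (HB : ln (1 - Rpower p N) < 0) by (apply ln_lt_0; lra).
split; intros H.
- assert (Hexp : Rpower (1 - Rpower p N) M = 1 - p) by lra.
  apply (f_equal ln) in Hexp. rewrite ln_Rpower in Hexp.
  rewrite <- Hexp. field. lra.
- unfold Rpower at 1. replace (M * ln (1 - Rpower p N)) with (ln (1 - p)).
  + rewrite exp_ln; lra.
  + rewrite <- H. field. lra.
Qed.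

Definition fixed_point (M N p : R) : Prop := 0 < p < 1 /\ f_mn M N p = p.

Lemma pc_unique M N p : 1 < N -> fixed_point M N p -> pc M N = p.
Proof.
intros HN Hfix.
assert (Hpc : fixed_point M N (pc M N))
  by exact (epsilon_spec (inhabits 0) (fixed_point M N) (ex_intro _ p Hfix)).
destruct Hfix as [Hp Hfp], Hpc as [Hq Hfq].
apply fixed_point_iff_mfix in Hfp, Hfq; try lra.
destruct (Rtotal_order (pc M N) p) as [Hlt|[Heq|Hgt]]; [|exact Heq|].
- pose proof (mfix_decr N _ _ HN (proj1 Hq) Hlt (proj2 Hp)). lra.
- pose proof (mfix_decr N _ _ HN (proj1 Hp) Hgt (proj2 Hq)). lra.
Qed.

Lemma mfix_attains N a b y : 1 < N -> 0 < a < b -> b < 1 ->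
  mfix N b <= y <= mfix N a -> exists x, a <= x <= b /\ mfix N x = y.
Proof.
intros HN Hab Hb Hy.
destruct (f_interv_is_interv (fun p => - mfix N p) a b (- y)) as [x [Hx Hxy]].
- lra.
- lra.
- intros t Ht. apply continuity_pt_opp, derivable_continuous_pt.
  exists (mfix_deriv N t). apply is_derive_Reals, is_derive_mfix; lra.
- exists x. split; [exact Hx | lra].
Qed.

Lemma pc_inverse_mfix N a b y : 1 < N -> 0 < a < b -> b < 1 ->
  mfix N b <= y <= mfix N a -> a <= pc y N <= b /\ mfix N (pc y N) = y.
Proof.
intros HN Hab Hb Hy.
destruct (mfix_attains N a b y HN Hab Hb Hy) as [x [Hx Hxy]].
replace (pc y N) with x; [split; [exact Hx | exact Hxy]|].
symmetry. apply pc_unique; [exact HN|]. split; [lra|].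
apply fixed_point_iff_mfix; lra.
Qed.

Lemma mfix_gt_near_0 m n : 2 <= m -> 2 <= n -> m < mfix n (/ (4 * m)).
Proof.
intros Hm Hn.
set (a := / (4 * m)).
assert (Ha : 0 < a <= / 8)
  by (unfold a; split; [apply Rinv_0_lt_compat | apply Rinv_le_contravar]; lra).
set (E := Rpower a n).
assert (HE : 0 < E < 1) by (apply Rpower_in_unit_interval; lra).
assert (HEa : E <= a * a).
{ replace (a * a) with (Rpower a 2)
    by (replace 2 with (INR 2) by (simpl; ring); rewrite Rpower_pow by lra; simpl; ring).
  destruct (Rle_lt_or_eq_dec 2 n Hn) as [Hlt|<-]; [|right; reflexivity].
  left. apply Rpower_lt_exponent_decr; lra. }
assert (HA : ln (1 - a) <= - a) by (pose proof (ln_le_sub_1 (1 - a)); lra).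
assert (HB : - (E / (1 - E)) <= ln (1 - E)).
{ pose proof (ln_le_sub_1 (/ (1 - E)) ltac:(apply Rinv_0_lt_compat; lra)) as H.
  rewrite ln_Rinv in H by lra.
  replace (/ (1 - E) - 1) with (E / (1 - E)) in H by (field; lra). lra. }
assert (HB0 : ln (1 - E) < 0) by (apply ln_lt_0; lra).
assert (HmE : m * (E / (1 - E)) < a).
{ apply (Rmult_lt_reg_r (1 - E)); [lra|].
  replace (m * (E / (1 - E)) * (1 - E)) with (m * E) by (field; lra).
  assert (Hma : m * a = / 4) by (unfold a; field; lra). nra. }
assert (Hlog : ln (1 - a) < m * ln (1 - E)) by nra.
unfold mfix. fold E.
apply (Rmult_lt_reg_r (- ln (1 - E))); [lra|].
replace (ln (1 - a) / ln (1 - E) * - ln (1 - E)) with (- ln (1 - a)) by (field; lra).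
lra.
Qed.

Lemma mfix_lt_near_1 m n : 2 <= m -> 1 < n -> mfix n (1 - / (n * n)) < m.
Proof.
intros Hm Hn.
set (b := 1 - / (n * n)).
assert (Hnb : n * n * (1 - b) = 1) by (unfold b; field; lra).
assert (Hb : 0 < b < 1).
{ assert (0 < / (n * n) < 1); [|unfold b; lra].
  split; [apply Rinv_0_lt_compat; nra|].
  rewrite <- Rinv_1. apply Rinv_lt_contravar; nra. }
set (E := Rpower b n).
assert (HE : 0 < E < 1) by (apply Rpower_in_unit_interval; lra).
pose proof (Rpower_bernoulli b n Hb Hn) as Hbern. fold E in Hbern.
assert (Hsq : (1 - E) * (1 - E) < 1 - b).
{ assert ((1 - E) * (1 - E) < (n * (1 - b)) * (n * (1 - b)))
    by (apply Rmult_le_0_lt_compat; lra).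
  nra. }
assert (H2 : 2 * ln (1 - E) < ln (1 - b)).
{ replace (2 * ln (1 - E)) with (ln ((1 - E) * (1 - E))) by (rewrite ln_mult; lra).
  apply ln_increasing; nra. }
assert (HB0 : ln (1 - E) < 0) by (apply ln_lt_0; lra).
assert (Hlog : m * ln (1 - E) < ln (1 - b)) by nra.
unfold mfix. fold E.
apply (Rmult_lt_reg_r (- ln (1 - E))); [lra|].
replace (ln (1 - b) / ln (1 - E) * - ln (1 - E)) with (- ln (1 - b)) by (field; lra).
lra.
Qed.

Lemma exists_mfix_eq m n : 2 <= m -> 2 <= n -> exists p, 0 < p < 1 /\ mfix n p = m.
Proof.
intros Hm Hn.
assert (Ha : 0 < / (4 * m) <= / 8)
  by (split; [apply Rinv_0_lt_compat | apply Rinv_le_contravar]; lra).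
assert (Hb : 3 / 4 <= 1 - / (n * n) < 1).
{ assert (0 < / (n * n) <= / 4); [|lra].
  split; [apply Rinv_0_lt_compat | apply Rinv_le_contravar]; nra. }
destruct (mfix_attains n (/ (4 * m)) (1 - / (n * n)) m) as [p [Hp Hpm]].
1-3: lra.
- pose proof (mfix_gt_near_0 m n Hm Hn). pose proof (mfix_lt_near_1 m n Hm ltac:(lra)). lra.
- exists p. split; [lra | exact Hpm].
Qed.

Lemma is_derive_pc_fst M N p : 1 < N -> 0 < p < 1 -> mfix N p = M ->
  is_derive (fun x => pc x N) M (/ mfix_deriv N p).
Proof.
intros HN Hp HpM.
assert (Hpc : pc M N = p).
{ apply pc_unique; [exact HN|]. split; [exact Hp|]. apply fixed_point_iff_mfix; lra. }
rewrite <- Hpc.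
apply (is_derive_inverse_decr (mfix N) (fun x => pc x N) (mfix_deriv N) (p / 2) ((1 + p) / 2)).
- lra.
- rewrite <- HpM. split; apply mfix_decr; lra.
- intros x z Hx Hxz Hz. apply mfix_decr; lra.
- intros x Hx. apply is_derive_mfix; lra.
- intros z Hz. apply pc_inverse_mfix; lra.
- rewrite Hpc. pose proof (mfix_deriv_lt_0 N p HN Hp). lra.
Qed.

Lemma fixed_point_swap M N r : 0 < M -> fixed_point N M r -> fixed_point M N (1 - Rpower r M).
Proof.
intros HM [Hr Hfix]. unfold f_mn in Hfix.
pose proof (Rpower_in_unit_interval r M Hr HM) as HR.
split; [lra|]. unfold f_mn.
replace (Rpower (1 - Rpower r M) N) with (1 - r) by lra.
replace (1 - (1 - r)) with r by ring. reflexivity.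
Qed.

Lemma is_derive_pc_snd M N r : 1 < M -> 0 < r < 1 -> mfix M r = N ->
  is_derive (fun y => pc M y) N (- (M * Rpower r (M - 1)) * / mfix_deriv M r).
Proof.
intros HM Hr HrN.
set (a := r / 2). set (b := (1 + r) / 2).
assert (Hnear : locally N (fun y => mfix M b < y < mfix M a)).
{ apply (open_and _ _ (open_gt _) (open_lt _)).
  rewrite <- HrN. split; apply mfix_decr; unfold a, b; lra. }
assert (Hswap : locally N (fun y => 1 - Rpower (pc y M) M = pc M y)).
{ revert Hnear. apply filter_imp. intros y Hy.
  destruct (pc_inverse_mfix M a b y HM) as [Hq Hqy]; unfold a, b in *; try lra.
  assert (Hy1 : 1 < y) by (rewrite <- Hqy; apply mfix_gt_1; lra).
  symmetry. apply pc_unique; [exact Hy1|].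
  apply fixed_point_swap; [lra|]. split; [lra|]. apply fixed_point_iff_mfix; lra. }
assert (Hpc : pc N M = r).
{ apply pc_unique; [exact HM|]. split; [exact Hr|]. apply fixed_point_iff_mfix; lra. }
assert (Hpow : is_derive (fun x => 1 - Rpower x M) (pc N M) (- (M * Rpower r (M - 1)))).
{ rewrite Hpc. unfold Rpower. auto_derive; [lra|].
  replace ((M - 1) * ln r) with (M * ln r + - ln r) by ring.
  rewrite exp_plus, exp_Ropp, exp_ln by lra. field. lra. }
pose proof (is_derive_comp _ _ N _ _ Hpow (is_derive_pc_fst N M r HM Hr HrN)) as Hcomp.
apply (is_derive_ext_loc _ _ _ _ Hswap).
replace (- (M * Rpower r (M - 1)) * / mfix_deriv M r)
  with (/ mfix_deriv M r * - (M * Rpower r (M - 1))) by ring.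
exact Hcomp.
Qed.

Theorem proposition3p4 (m n : R) (hm : 2 <= m) (hn : 2 <= n) :
  (exists d, is_derive (fun x => pc x n) m d /\ d < 0) /\
  (exists d, is_derive (fun y => pc m y) n d /\ 0 < d).
Proof.
destruct (exists_mfix_eq m n hm hn) as [p [Hp Hpm]].
destruct (exists_mfix_eq n m hn hm) as [r [Hr Hrn]].
pose proof (mfix_deriv_lt_0 n p ltac:(lra) Hp) as Hdp.
pose proof (mfix_deriv_lt_0 m r ltac:(lra) Hr) as Hdr.
split.
- exists (/ mfix_deriv n p). split.
  + apply is_derive_pc_fst; [lra | exact Hp | exact Hpm].
  + apply Rinv_lt_0_compat, Hdp.
- exists (- (m * Rpower r (m - 1)) * / mfix_deriv m r). split.
  + apply is_derive_pc_snd; [lra | exact Hr | exact Hrn].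
  + assert (Hpow : 0 < m * Rpower r (m - 1)) by (pose proof (exp_pos ((m - 1) * ln r)); unfold Rpower; nra).
    pose proof (Rinv_lt_0_compat _ Hdr). nra.
Qed.
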